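(* Let $\mathcal{L}:\mathbb{R}^p\to\mathbb{R}$ be continuously differentiable, let $\theta_0\in\mathbb{R}^p$, and let $\mathcal{B}(\theta_0)\subseteq\mathbb{R}^p$ be a non-empty set containing $\theta_0$. Let $(\theta_t)_{t\ge 0}$ be generated by gradient descent $\theta_{t+1}=\theta_t-\eta_t\nabla_\theta\mathcal{L}(\theta_t)$, and assume all iterates $\theta_t$, $t\ge1$, lie in $\mathcal{B}(\theta_0)$. Fix a step $t$ and suppose: (RSC condition) there is a non-empty set $\mathcal{N}_t$ such that (a) $\mathcal{N}_t\subseteq\mathcal{B}(\theta_0)$; (b) either (b.1) $\theta_{t+1}\in\mathcal{N}_t$ and either $\theta_t\notin\mathcal{N}_t$ or $\mathcal{L}(\theta_t)\ne\inf_{\theta\in\mathcal{N}_t}\mathcal{L}(\theta)$, or (b.2) there exists $\theta'\in\mathcal{N}_t$ with $\mathcal{L}(\theta')<\mathcal{L}(\theta_t)$; and (c) $\mathcal{L}$ satisfies $\alpha_t$-restricted strong convexity with respect to $(\mathcal{N}_t,\theta_t)$ for some $\alpha_t>0$; (Smoothness condition) $\mathcal{L}$ is $\beta$-smooth on $\mathcal{B}(\theta_0)$ for some $\beta>0$, i.e. $\mathcal{L}(\theta')\le\mathcal{L}(\theta)+\langle\theta'-\theta,\nabla_\theta\mathcal{L}(\theta)\rangle+\frac{\beta}{2}\|\theta'-\theta\|_2^2$ for all $\theta,\theta'\in\mathcal{B}(\theta_0)$. Assume $\alpha_t\le\beta$ and $\eta_t=\omega_t/\beta$ for some $\omega_t\in(0,2)$.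 If $\mathcal{L}(\theta_t)\ne\inf_{\theta\in\mathcal{B}(\theta_0)}\mathcal{L}(\theta)$, then $$0\le\gamma_t:=\frac{\inf_{\theta\in\mathcal{N}_t}\mathcal{L}(\theta)-\inf_{\theta\in\mathcal{B}(\theta_0)}\mathcal{L}(\theta)}{\mathcal{L}(\theta_t)-\inf_{\theta\in\mathcal{B}(\theta_0)}\mathcal{L}(\theta)}<1$$ and $$\mathcal{L}(\theta_{t+1})-\inf_{\theta\in\mathcal{B}(\theta_0)}\mathcal{L}(\theta)\le\Big(1-\frac{\alpha_t\omega_t(1-\gamma_t)}{\beta}(2-\omega_t)\Big)\Big(\mathcal{L}(\theta_t)-\inf_{\theta\in\mathcal{B}(\theta_0)}\mathcal{L}(\theta)\Big).$$
   Context: A function $\mathcal{L}$ satisfies $\alpha$-restricted strong convexity ($\alpha$-RSC) with respect to a tuple $(\mathcal{S},\theta)$, where $\mathcal{S}\subseteq\mathbb{R}^p$ and $\theta\in\mathbb{R}^p$ is fixed, if $\alpha>0$ and for every $\theta'\in\mathcal{S}$: $\mathcal{L}(\theta')\ge\mathcal{L}(\theta)+\langle\theta'-\theta,\nabla_\theta\mathcal{L}(\theta)\rangle+\frac{\alpha}{2}\|\theta'-\theta\|_2^2$. *)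

From HB Require Import structures.
From mathcomp Require Import all_boot all_order all_algebra.
From mathcomp Require Import all_classical all_reals all_analysis.
Set Implicit Arguments. Unset Strict Implicit. Unset Printing Implicit Defensive.
Import Order.TTheory GRing.Theory Num.Theory.
Import numFieldNormedType.Exports.
Local Open Scope classical_set_scope.
Local Open Scope ring_scope.

Section Defs.
Context {R : realType} {p : nat}.

Definition dotp (u v : 'rV[R]_p) : R := \sum_(i < p) u 0 i * v 0 i.
Definition sqnorm2 (u : 'rV[R]_p) : R := dotp u u.

Definition grad (f : 'rV[R]_p -> R) (x : 'rV[R]_p) : 'rV[R]_p :=
  \row_(i < p) ('d f x) (delta_mx 0 i : 'rV[R]_p).

Definition cont_diff (f : 'rV[R]_p -> R) : Prop :=
  (forall x, differentiable f x) /\ continuous (grad f).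

Definition RSC (f : 'rV[R]_p -> R) (alpha : R) (S : set 'rV[R]_p) (th : 'rV[R]_p) : Prop :=
  0 < alpha /\
  forall th', S th' ->
    f th + dotp (th' - th) (grad f th) + alpha / 2 * sqnorm2 (th' - th) <= f th'.

Definition smooth_on (f : 'rV[R]_p -> R) (beta : R) (B : set 'rV[R]_p) : Prop :=
  forall th th', B th -> B th' ->
    f th' <= f th + dotp (th' - th) (grad f th) + beta / 2 * sqnorm2 (th' - th).

End Defs.

From HB Require Import structures.
From mathcomp Require Import all_boot all_order all_algebra.
From mathcomp Require Import all_classical all_reals all_analysis.
From mathcomp Require Import ring lra.
Import Order.TTheory GRing.Theory Num.Theory.
Import numFieldNormedType.Exports.
Local Open Scope classical_set_scope.
Local Open Scope ring_scope.

(* Write g := grad L (theta t), S := |g|^2 and x+ := theta (t+1).  Smoothness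
   turns the step of length omega / beta into the descent
   L(x+) <= L(x) - omega (2 - omega) S / (2 beta).  Minimising the RSC lower
   bound over the displacement gives the Polyak-Lojasiewicz type inequality
   L(x) - inf_N L <= S / (2 alpha).  Condition (b) makes inf_N L < L(x), so
   gamma < 1, and eliminating S between the two inequalities yields the
   contraction, since L(x) - inf_N L = (1 - gamma) (L(x) - inf_B L). *)

Section InnerProduct.
Context {R : realType} {p : nat}.
Implicit Types (u v : 'rV[R]_p) (a : R).

Lemma dotpZl a u v : dotp (a *: u) v = a * dotp u v.
Proof. by rewrite /dotp mulr_sumr; apply: eq_bigr => i _; rewrite mxE mulrA. Qed.

Lemma dotpZr a u v : dotp u (a *: v) = a * dotp u v.
Proof.
by rewrite /dotp mulr_sumr; apply: eq_bigr => i _; rewrite mxE mulrCA.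
Qed.

Lemma sqnorm2Z a u : sqnorm2 (a *: u) = a ^+ 2 * sqnorm2 u.
Proof. by rewrite /sqnorm2 dotpZl dotpZr mulrA -expr2. Qed.

Lemma sqnorm2_ge0 u : 0 <= sqnorm2 u.
Proof. by apply: sumr_ge0 => i _; rewrite -expr2 sqr_ge0. Qed.

Lemma sqnorm2_eq0 u : (sqnorm2 u == 0) = (u == 0).
Proof.
apply/idP/eqP => [|->]; last by rewrite /sqnorm2 /dotp big1 // => i _; rewrite mxE mul0r.
rewrite psumr_eq0 => [/allP u0|i _]; last by rewrite -expr2 sqr_ge0.
apply/rowP => i; rewrite mxE; apply/eqP.
by rewrite -sqrf_eq0 expr2; exact: u0 (mem_index_enum _).
Qed.

Lemma dotp_sqnorm2_lbound u v a :
  0 < a -> - (sqnorm2 v / (2 * a)) <= dotp u v + a / 2 * sqnorm2 u.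
Proof.
move=> a_gt0; rewrite -subr_ge0 opprK /sqnorm2 /dotp.
have -> : \sum_(i < p) u 0 i * v 0 i + a / 2 * (\sum_(i < p) u 0 i * u 0 i) +
   (\sum_(i < p) v 0 i * v 0 i) / (2 * a) =
   \sum_(i < p) (a * u 0 i + v 0 i) ^+ 2 / (2 * a).
  rewrite mulr_sumr mulr_suml -!big_split /=; apply: eq_bigr => i _.
  by field; rewrite gt_eqF.
by apply: sumr_ge0 => i _; rewrite divr_ge0 ?sqr_ge0 ?mulr_ge0 ?ltW.
Qed.

End InnerProduct.

Lemma le_inf_image {T : Type} {R : realType} (f : T -> R) (A B : set T) :
  A !=set0 -> A `<=` B -> has_lbound (f @` B) -> inf (f @` B) <= inf (f @` A).
Proof.
move=> [x Ax] AB lbB; apply: lb_le_inf; first by exists (f x), x.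
by move=> _ [y Ay <-]; apply: (ge_inf lbB); exists y; first exact: AB.
Qed.

Section GradientStep.
Context {R : realType} {p : nat} (L : 'rV[R]_p -> R).
Implicit Types (x y g : 'rV[R]_p) (N B : set 'rV[R]_p).

Lemma smooth_descent B beta omega x :
  0 < beta -> smooth_on L beta B -> B x ->
  B (x - omega / beta *: grad L x) ->
  L (x - omega / beta *: grad L x)
    <= L x - omega * (2 - omega) / (2 * beta) * sqnorm2 (grad L x).
Proof.
move=> beta_gt0 smooth Bx Bstep; have := smooth _ _ Bx Bstep.
have -> : x - omega / beta *: grad L x - x = (- (omega / beta)) *: grad L x.
  by rewrite scaleNr addrAC subrr add0r.
rewrite dotpZl sqnorm2Z -/(sqnorm2 _).
have -> : L x + - (omega / beta) * sqnorm2 (grad L x)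
            + beta / 2 * ((- (omega / beta)) ^+ 2 * sqnorm2 (grad L x))
          = L x - omega * (2 - omega) / (2 * beta) * sqnorm2 (grad L x).
  by field; rewrite gt_eqF.
done.
Qed.

Lemma RSC_lbound alpha N x : RSC L alpha N x ->
  lbound (L @` N) (L x - sqnorm2 (grad L x) / (2 * alpha)).
Proof.
move=> [alpha_gt0 rsc] _ [y Ny <-]; have := rsc _ Ny.
have := dotp_sqnorm2_lbound (y - x) (grad L x) alpha alpha_gt0; lra.
Qed.

Lemma inf_lt_of_descent k e g N x :
  has_lbound (L @` N) -> 0 < k ->
  L (x - e *: g) <= L x - k * sqnorm2 g ->
  (N (x - e *: g) /\ (~ N x \/ L x <> inf (L @` N)))
    \/ (exists y, N y /\ L y < L x) ->
  inf (L @` N) < L x.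
Proof.
move=> lbN k_gt0 descent [[Nstep Nx_or_neq] | [y [Ny Ly_lt]]]; last first.
  by apply: le_lt_trans (ge_inf lbN _) Ly_lt; exists y.
have infN_le_step : inf (L @` N) <= L (x - e *: g).
  by apply: (ge_inf lbN); exists (x - e *: g).
case: Nx_or_neq => [Nx | neq].
  have g_neq0 : g != 0.
    by apply/eqP => g0; apply: Nx; rewrite g0 scaler0 subr0 in Nstep.
  apply: le_lt_trans infN_le_step (le_lt_trans descent _).
  by rewrite ltrBlDr ltrDl mulr_gt0 // lt_neqAle sqnorm2_ge0 eq_sym sqnorm2_eq0 g_neq0.
rewrite lt_neqAle; apply/andP; split; first by apply/eqP => eq_inf; apply: neq.
apply: le_trans infN_le_step (le_trans descent _).
by rewrite gerBl; apply: mulr_ge0; [exact: ltW | exact: sqnorm2_ge0].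
Qed.

End GradientStep.

Lemma contraction_of_descent_and_gap {R : realFieldType}
    {alpha beta omega S Lx Lx' LN LB : R} :
  0 < alpha -> 0 < beta -> 0 < omega < 2 ->
  Lx' <= Lx - omega * (2 - omega) / (2 * beta) * S ->
  Lx - S / (2 * alpha) <= LN -> LB <= LN -> LN < Lx ->
  let gamma := (LN - LB) / (Lx - LB) in
  0 <= gamma < 1 /\
  Lx' - LB <= (1 - alpha * omega * (1 - gamma) / beta * (2 - omega)) * (Lx - LB).
Proof.
move=> alpha_gt0 beta_gt0 /andP[omega_gt0 omega_lt2] descent PL LB_LN LN_lt gamma.
have gap_gt0 : 0 < Lx - LB by rewrite subr_gt0; exact: le_lt_trans LB_LN LN_lt.
have k_gt0 : 0 < omega * (2 - omega) / beta by rewrite divr_gt0 ?mulr_gt0 ?subr_gt0.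
split.
  apply/andP; split; first by apply: divr_ge0; [rewrite subr_ge0 | exact: ltW].
  by rewrite /gamma ltr_pdivrMr // mul1r ltrD2r.
have -> : (1 - alpha * omega * (1 - gamma) / beta * (2 - omega)) * (Lx - LB) =
          Lx - LB - alpha * (omega * (2 - omega) / beta) * (Lx - LN).
  by rewrite /gamma; field; rewrite !gt_eqF.
have PL' : 2 * alpha * (Lx - LN) <= S.
  by rewrite -ler_pdivlMl ?mulr_gt0 // mulrC; lra.
have {}descent : Lx' <= Lx - omega * (2 - omega) / beta * (S / 2).
  by rewrite (_ : _ * (S / 2) = omega * (2 - omega) / (2 * beta) * S) //; field; rewrite gt_eqF.
have := ler_wpM2l (ltW k_gt0) PL'.
move: descent; set k := omega * (2 - omega) / beta; clearbody k; lra.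
Qed.

Theorem theorem1 (R : realType) (p : nat) (L : 'rV[R]_p -> R)
  (theta0 : 'rV[R]_p) (B : set 'rV[R]_p)
  (theta : nat -> 'rV[R]_p) (eta : nat -> R) (t : nat)
  (N : set 'rV[R]_p) (alpha beta omega : R) :
  cont_diff L ->
  B theta0 ->
  theta 0%N = theta0 ->
  (forall s, theta s.+1 = theta s - eta s *: grad L (theta s)) ->
  (forall s, (1 <= s)%N -> B (theta s)) ->
  (* RSC condition *)
  N !=set0 ->
  N `<=` B ->
  ((N (theta t.+1) /\ (~ N (theta t) \/ L (theta t) <> inf (L @` N)))
    \/ (exists th', N th' /\ L th' < L (theta t))) ->
  RSC L alpha N (theta t) ->
  (* smoothness condition *)
  0 < beta ->
  smooth_on L beta B ->
  alpha <= beta ->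
  0 < omega < 2 ->
  eta t = omega / beta ->
  (* inf of L over B is a real number (implicit in the paper) *)
  has_lbound (L @` B) ->
  L (theta t) <> inf (L @` B) ->
  let gamma := (inf (L @` N) - inf (L @` B)) / (L (theta t) - inf (L @` B)) in
  0 <= gamma < 1 /\
  L (theta t.+1) - inf (L @` B)
    <= (1 - alpha * omega * (1 - gamma) / beta * (2 - omega))
       * (L (theta t) - inf (L @` B)).
Proof.
(* Unused: continuity of the gradient; alpha <= beta, which only keeps the
   contraction factor nonnegative; and L (theta t) <> inf_B L, which already
   follows from condition (b). *)
move=> _ B0 theta_0 gd_step B_iter Nne NB cond_b rsc beta_gt0 smooth _ omega_in eta_t lbB _.
have Bt : B (theta t) by case: (t) => [|s]; [rewrite theta_0 | apply: B_iter].
have Bt1 : B (theta t.+1) by apply: B_iter.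
rewrite gd_step eta_t in cond_b Bt1 *.
have descent := smooth_descent L B beta omega (theta t) beta_gt0 smooth Bt Bt1.
have [alpha_gt0 _] := rsc.
have k_gt0 : 0 < omega * (2 - omega) / (2 * beta).
  by case/andP: omega_in => ? ?; rewrite divr_gt0 ?mulr_gt0 ?subr_gt0.
have PL_lbound := RSC_lbound L alpha N (theta t) rsc.
have PL := lb_le_inf (image_nonempty L Nne) PL_lbound.
have infB_le_infN := le_inf_image L N B Nne NB lbB.
have lbN : has_lbound (L @` N) := ex_intro _ _ PL_lbound.
have infN_lt := inf_lt_of_descent L _ _ _ N (theta t) lbN k_gt0 descent cond_b.
exact: (contraction_of_descent_and_gap alpha_gt0 beta_gt0 omega_in descent
  PL infB_le_infN infN_lt).
Qed.
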